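(* Let $(X,\cdot)$ be a finite Rump right quasigroup. Then for every $x\in X$ there is a unique $y\in X$ such that $x(y/x) = y$.
   Context: A right quasigroup is a magma in which every right translation $y\mapsto yx$ is a bijection; $y/x$ denotes the unique $w$ with $wx = y$. A Rump right quasigroup is a right quasigroup satisfying $(zx)(yx)=(zy)(xy)$ for all $x,y,z$. *)

From mathcomp Require Import all_boot.
Set Implicit Arguments. Unset Strict Implicit. Unset Printing Implicit Defensive.

Definition right_quasigroup (T : Type) (op : T -> T -> T) : Prop :=
  forall x : T, bijective (fun y => op y x).

Definition rump (T : Type) (op : T -> T -> T) : Prop :=
  forall x y z : T, op (op z x) (op y x) = op (op z y) (op x y).

Definition rump_right_quasigroup (T : Type) (op : T -> T -> T) : Prop :=
  right_quasigroup op /\ rump op.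

(* Right division y / x on a finite magma: the (unique, in a right quasigroup)
   w with op w x = y; defaults to y if no such w exists. *)
Definition rdiv (T : finType) (op : T -> T -> T) (y x : T) : T :=
  odflt y [pick w | op w x == y].

Lemma rdivK (T : finType) (op : T -> T -> T) :
  right_quasigroup op -> forall y x, op (rdiv op y x) x = y.
Proof.
move=> rq y x; rewrite /rdiv; case: pickP => [w /eqP //|H].
case: (rq x) => g _ gK; have := H (g y); by rewrite /= gK eqxx.
Qed.

From mathcomp Require Import all_boot.

Set Implicit Arguments.
Unset Strict Implicit.
Unset Printing Implicit Defensive.

(* The Rump identity with z = y reads (yv)(yv) = (yy)(vy), so the set of
   squares is closed under every right translation; by finiteness each right
   translation permutes it, and since tt lies in it and equals ut only for
   u = t, every t is a square.  Squaring is therefore a bijection.  Now if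
   x(y/x) = y, then w = y/x commutes with x, and the Rump identity gives
   zx = zw for all z; hence xx = xw = wx = ww, so x = w and y = xx. *)

Section RumpRightQuasigroup.

Variables (T : finType) (op : T -> T -> T).
Hypotheses (rq : right_quasigroup op) (ru : rump op).

Lemma rmul_inj x : injective (op^~ x).
Proof. exact: bij_inj (rq x). Qed.

Lemma rdiv_mul y x : rdiv op (op y x) x = y.
Proof. by apply: (@rmul_inj x); rewrite /= rdivK. Qed.

Lemma square_mul y v : op (op y v) (op y v) = op (op y y) (op v y).
Proof. exact: ru. Qed.

Definition squares : {set T} := [set op y y | y in T].

Lemma squares_rmul_closed w : [set op u w | u in squares] \subset squares.
Proof.
apply/subsetP=> _ /imsetP [_ /imsetP [y _ ->] ->].
by rewrite -(rdivK rq w y) -square_mul imset_f.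
Qed.

Lemma squares_rmul w : [set op u w | u in squares] = squares.
Proof.
apply/eqP; rewrite eqEcard squares_rmul_closed card_imset ?leqnn //.
exact: rmul_inj.
Qed.

Lemma squaresT : squares = [set: T].
Proof.
apply/setP=> t; rewrite in_setT.
have : op t t \in squares by rewrite imset_f.
by rewrite -{1}(squares_rmul t) => /imsetP [u u_sq /rmul_inj ->].
Qed.

Lemma square_inj : injective (fun y => op y y).
Proof.
have /imset_injP sq_inj : #|squares| == #|T| by rewrite squaresT cardsT.
by move=> y1 y2; apply: sq_inj.
Qed.

Lemma rmul_eq_of_commute x w : op x w = op w x -> forall z, op z x = op z w.
Proof. by move=> xw z; apply: (@rmul_inj (op w x)); rewrite /= ru xw. Qed.

End RumpRightQuasigroup.

Theorem mainTheorem5 (T : finType) (op : T -> T -> T) :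
  rump_right_quasigroup op ->
  forall x : T, exists! y : T, op x (rdiv op y x) = y.
Proof.
case=> rq ru x; exists (op x x); split; first by rewrite rdiv_mul.
move=> y; set w := rdiv op y x => xw_y.
have wx_y : op w x = y by rewrite rdivK.
have zx_zw := rmul_eq_of_commute rq ru (etrans xw_y (esym wx_y)).
have sq_xw : op x x = op w w by rewrite zx_zw xw_y -wx_y zx_zw.
by rewrite -wx_y (square_inj rq ru sq_xw).
Qed.
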